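(* Let $\langle S,L,\tau,\ell\rangle$ be a labelled Markov chain. For all $s,t\in S$, the function $\delta_{\_}(s,t):(S\to\mathcal{D}(S))\to[0,1]$ is lower semi-continuous at $\tau$: for every sequence $(\tau_n)_n$ of transition functions converging to $\tau$, $\liminf_n\delta_{\tau_n}(s,t)\ge\delta_\tau(s,t)$.
   Context: A labelled Markov chain is a tuple $\langle S,L,\tau,\ell\rangle$ with $S$ a finite set of states, $L$ a finite set of labels, $\tau:S\to\mathcal{D}(S)$ a transition function ($\mathcal{D}(X)$ = probability distributions on $X$) and $\ell:S\to L$ a labelling. For $\mu,\nu\in\mathcal{D}(X)$, $\Omega(\mu,\nu)$ is the set of couplings: distributions $\omega$ on $X\times X$ with first marginal $\mu$ and second marginal $\nu$. Transition functions are equipped with the metric $d_F(\sigma,\tau)=\max_{s,x\in S}|\sigma(s)(x)-\tau(s)(x)|$. For any transition function $\sigma$, the bisimilarity distance $\delta_\sigma:S\times S\to[0,1]$ is the least fixed point of $\Delta_\sigma$, where $\Delta_\sigma(d)(s,t)=1$ if $\ell(s)\ne\ell(t)$ and $\Delta_\sigma(d)(s,t)=\inf_{\omega\in\Omega(\sigma(s),\sigma(t))}\sum_{u,v}\omega(u,v)d(u,v)$ otherwise. *)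

From HB Require Import structures.
From mathcomp Require Import all_boot all_order all_algebra.
From mathcomp Require Import all_classical all_reals all_analysis.
Set Implicit Arguments. Unset Strict Implicit. Unset Printing Implicit Defensive.
Import Order.TTheory GRing.Theory Num.Theory.
Import numFieldNormedType.Exports.
Local Open Scope classical_set_scope.
Local Open Scope ring_scope.

Section LMC.
Variables (R : realType) (S L : finType).

Definition is_distr (mu : S -> R) : Prop :=
  (forall x, 0 <= mu x) /\ \sum_(x : S) mu x = 1.

Definition is_trans (sigma : S -> S -> R) : Prop :=
  forall s, is_distr (sigma s).

Definition is_coupling (mu nu : S -> R) (omega : S -> S -> R) : Prop :=
  [/\ forall u v, 0 <= omega u v,
      forall u, \sum_(v : S) omega u v = mu u &
      forall v, \sum_(u : S) omega u v = nu v].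

Definition dF (sigma tau : S -> S -> R) : R :=
  \big[Num.max/0]_(s : S) \big[Num.max/0]_(x : S) `|sigma s x - tau s x|.

Definition unit_valued (d : S -> S -> R) : Prop :=
  forall s t, 0 <= d s t <= 1.

Definition Delta (ell : S -> L) (sigma : S -> S -> R) (d : S -> S -> R)
    (s t : S) : R :=
  if ell s != ell t then 1
  else inf [set r : R | exists omega, is_coupling (sigma s) (sigma t) omega /\
                          r = \sum_(u : S) \sum_(v : S) omega u v * d u v].

Definition is_bisim_dist (ell : S -> L) (sigma : S -> S -> R)
    (delta : S -> S -> R) : Prop :=
  [/\ unit_valued delta,
      (forall s t, Delta ell sigma delta s t = delta s t) &
      forall d, unit_valued d -> (forall s t, Delta ell sigma d s t = d s t) ->
        forall s t, delta s t <= d s t].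

End LMC.

(* Let D be the pointwise liminf of the distances delta_{tau_n}.  Since
   delta_tau is the least fixed point of Delta_tau, Knaster-Tarski reduces the
   claim to Delta_tau(D) <= D.  Couplings are stable under perturbation of
   their marginals: a coupling of tau_n(s), tau_n(t) can be shrunk under
   tau(s), tau(t) and completed to a coupling of them, at an extra cost of at
   most the l1-distance of the marginals, i.e. O(|S| d_F(tau_n, tau)).  Since
   D <= delta_{tau_n} + e for large n, this gives
     Delta_tau(D)(s,t) <= Delta_{tau_n}(delta_{tau_n})(s,t) + O(e)
                        = delta_{tau_n}(s,t) + O(e),
   and choosing such an n where delta_{tau_n}(s,t) is close to its liminf
   concludes. *)

From HB Require Import structures.
From mathcomp Require Import all_boot all_order all_algebra.
From mathcomp Require Import all_classical all_reals all_analysis.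
From mathcomp Require Import lra.
Import Order.TTheory GRing.Theory Num.Theory.
Import numFieldNormedType.Exports.
Local Open Scope classical_set_scope.
Local Open Scope ring_scope.
Set Implicit Arguments. Unset Strict Implicit. Unset Printing Implicit Defensive.

Section Couplings.
Variables (R : realType) (S : finType).
Implicit Types (mu nu : S -> R) (om d : S -> S -> R).

Definition total_mass om := \sum_(u : S) \sum_(v : S) om u v.

Definition transport_cost om d := \sum_(u : S) \sum_(v : S) om u v * d u v.

Definition l1_dist mu nu := \sum_(x : S) `|mu x - nu x|.

Lemma total_mass_coupling mu nu om :
  is_distr mu -> is_coupling mu nu om -> total_mass om = 1.
Proof. by move=> [_ <-] [_ omr _]; apply: eq_bigr => u _; rewrite omr. Qed.

Lemma prod_coupling mu nu :
  is_distr mu -> is_distr nu -> is_coupling mu nu (fun u v => mu u * nu v).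
Proof.
move=> [mu0 mu1] [nu0 nu1]; split.
- by move=> u v; rewrite mulr_ge0.
- by move=> u; rewrite -mulr_sumr nu1 mulr1.
- by move=> v; rewrite -mulr_suml mu1 mul1r.
Qed.

Lemma transport_cost_ge0 om d :
  (forall u v, 0 <= om u v) -> (forall u v, 0 <= d u v) -> 0 <= transport_cost om d.
Proof.
by move=> om0 d0; apply: sumr_ge0 => u _; apply: sumr_ge0 => v _; rewrite mulr_ge0.
Qed.

Lemma transport_cost_le_shift om d d' e :
  (forall u v, 0 <= om u v) -> (forall u v, d u v <= d' u v + e) ->
  transport_cost om d <= transport_cost om d' + e * total_mass om.
Proof.
move=> om0 dd'; rewrite /transport_cost /total_mass mulr_sumr -big_split /=.
apply: ler_sum => u _; rewrite mulr_sumr -big_split /=.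
by apply: ler_sum => v _; rewrite [e * _]mulrC -mulrDr ler_wpM2l.
Qed.

Lemma transport_cost_le_sub om om' d :
  (forall u v, 0 <= om u v <= om' u v) -> (forall u v, 0 <= d u v <= 1) ->
  transport_cost om d <= transport_cost om' d
                      <= transport_cost om d + (total_mass om' - total_mass om).
Proof.
move=> hom hd; rewrite /transport_cost /total_mass -sumrB -big_split /=.
apply/andP; split.
  apply: ler_sum => u _; apply: ler_sum => v _.
  by have /andP[? ?] := hom u v; have /andP[? _] := hd u v; rewrite ler_wpM2r.
apply: ler_sum => u _; rewrite -sumrB -big_split /=; apply: ler_sum => v _.
have /andP[? ?] := hom u v; have /andP[? ?] := hd u v.
by rewrite -lerBlDl -mulrBl ler_piMr // subr_ge0.
Qed.

Lemma shrink_factor (a a' : R) : 0 <= a -> 0 <= a' ->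
  exists rho, [/\ 0 <= rho <= 1, rho * a' <= a & a' - rho * a' <= `|a' - a|].
Proof.
move=> a0 a'0; case: (leP a' a) => h.
  by exists 1; rewrite ler01 lexx mul1r h subrr.
have a'p : 0 < a' by lra.
exists (a / a'); rewrite divfK ?gt_eqF // ler_norm; split => //.
by rewrite divr_ge0 //= ler_pdivrMr // mul1r ltW.
Qed.

(* Scale the row [u] of [om] by [rho u] and the column [v] by [kap v], so that
   the margins fit under [mu] and [nu], losing mass only where [mu'] exceeds
   [mu] or [nu'] exceeds [nu]. *)
Lemma coupling_shrink mu nu mu' nu' om :
  (forall u, 0 <= mu u) -> (forall v, 0 <= nu v) -> is_coupling mu' nu' om ->
  exists om2, [/\ forall u v, 0 <= om2 u v <= om u v,
    forall u, \sum_(v : S) om2 u v <= mu u,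
    forall v, \sum_(u : S) om2 u v <= nu v &
    total_mass om - total_mass om2 <= l1_dist mu' mu + l1_dist nu' nu].
Proof.
move=> mu0 nu0 [om0 omr omc].
have mu'0 u : 0 <= mu' u by rewrite -omr sumr_ge0.
have nu'0 v : 0 <= nu' v by rewrite -omc sumr_ge0.
have /choice [rho hrho] : forall u, exists r : R,
    [/\ 0 <= r <= 1, r * mu' u <= mu u & mu' u - r * mu' u <= `|mu' u - mu u|].
  by move=> u; apply: shrink_factor.
have /choice [kap hkap] : forall v, exists r : R,
    [/\ 0 <= r <= 1, r * nu' v <= nu v & nu' v - r * nu' v <= `|nu' v - nu v|].
  by move=> v; apply: shrink_factor.
exists (fun u v => om u v * (rho u * kap v)); split.
- move=> u v; have [/andP[? ?] _ _] := hrho u; have [/andP[? ?] _ _] := hkap v.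
  by rewrite !mulr_ge0 //= ler_piMr // mulr_ile1.
- move=> u; have [/andP[? ?] h _] := hrho u; apply: le_trans h.
  rewrite -omr mulr_sumr; apply: ler_sum => v _.
  have [/andP[? ?] _ _] := hkap v.
  by rewrite mulrCA ler_wpM2l // ler_piMr.
- move=> v; have [/andP[? ?] h _] := hkap v; apply: le_trans h.
  rewrite -omc mulr_sumr; apply: ler_sum => u _.
  have [/andP[? ?] _ _] := hrho u.
  by rewrite mulrA mulrC ler_wpM2l // ler_piMr.
rewrite /total_mass -sumrB.
apply: le_trans (_ : \sum_u \sum_v (om u v * (1 - rho u) + om u v * (1 - kap v)) <= _).
  apply: ler_sum => u _; rewrite -sumrB; apply: ler_sum => v _.
  rewrite -mulrDr -[X in X - _]mulr1 -mulrBr ler_wpM2l //.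
  have [/andP[? ?] _ _] := hrho u; have [/andP[? ?] _ _] := hkap v.
  nra.
rewrite (eq_bigr (fun u => \sum_v om u v * (1 - rho u) + \sum_v om u v * (1 - kap v)));
  last by move=> u _; rewrite big_split.
rewrite big_split /=; apply: lerD.
  apply: ler_sum => u _; rewrite -mulr_suml omr.
  by have [_ _ h] := hrho u; rewrite mulrBr mulr1 mulrC.
rewrite exchange_big /=; apply: ler_sum => v _; rewrite -mulr_suml omc.
by have [_ _ h] := hkap v; rewrite mulrBr mulr1 mulrC.
Qed.

(* Distribute the missing row mass [r] and column mass [c] proportionally:
   [om + r c / m], where [m] is the total missing mass. *)
Lemma subcoupling_extend mu nu om : is_distr mu -> is_distr nu ->
  (forall u v, 0 <= om u v) -> (forall u, \sum_(v : S) om u v <= mu u) ->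
  (forall v, \sum_(u : S) om u v <= nu v) ->
  exists om', is_coupling mu nu om' /\ forall u v, om u v <= om' u v.
Proof.
move=> [_ mu1] [_ nu1] om0 rowle colle.
pose r u := mu u - \sum_v om u v; pose c v := nu v - \sum_u om u v.
have r0 u : 0 <= r u by rewrite subr_ge0.
have c0 v : 0 <= c v by rewrite subr_ge0.
pose m := \sum_u r u.
have cE : \sum_v c v = m.
  by rewrite /m /r /c !sumrB mu1 nu1 exchange_big.
have m0_r u : m = 0 -> r u = 0.
  by move/eqP; rewrite psumr_eq0 // => /allP/(_ u (mem_index_enum _))/eqP.
have m0_c v : m = 0 -> c v = 0.
  by rewrite -cE => /eqP; rewrite psumr_eq0 // => /allP/(_ v (mem_index_enum _))/eqP.
exists (fun u v => om u v + r u * c v / m); split; [split|].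
- by move=> u v; rewrite addr_ge0 // divr_ge0 // ?mulr_ge0 // /m sumr_ge0.
- move=> u; rewrite big_split /= -mulr_suml -mulr_sumr cE.
  have [m0|mn0] := eqVneq m 0; last by rewrite mulfK // addrC subrK.
  by rewrite m0 mulr0 mul0r addr0; apply/esym/subr0_eq/m0_r.
- move=> v; rewrite big_split /= -mulr_suml -mulr_suml -/m.
  have [m0|mn0] := eqVneq m 0; last by rewrite mulrAC divff // mul1r addrC subrK.
  by rewrite m0 !mul0r addr0; apply/esym/subr0_eq/m0_c.
- by move=> u v; rewrite lerDl divr_ge0 // ?mulr_ge0 // /m sumr_ge0.
Qed.

Lemma coupling_perturb mu nu mu' nu' om d :
  is_distr mu -> is_distr nu -> is_distr mu' -> is_coupling mu' nu' om ->
  (forall u v, 0 <= d u v <= 1) ->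
  exists2 om', is_coupling mu nu om' &
    transport_cost om' d <= transport_cost om d + (l1_dist mu' mu + l1_dist nu' nu).
Proof.
move=> hmu hnu hmu' hom hd.
have [om2 [om2_om rowle colle deficit]] := coupling_shrink hmu.1 hnu.1 hom.
have om2_0 u v : 0 <= om2 u v by case/andP: (om2_om u v).
have [om' [hom' om2_om']] := subcoupling_extend hmu hnu om2_0 rowle colle.
exists om' => //.
have /andP[cost_om2 _] := transport_cost_le_sub om2_om hd.
have om2_om'' u v : 0 <= om2 u v <= om' u v by rewrite om2_0 om2_om'.
have /andP[_ cost_om'] := transport_cost_le_sub om2_om'' hd.
move: deficit; rewrite (total_mass_coupling hmu' hom) -(total_mass_coupling hmu hom').
lra.
Qed.

Lemma dF_ge_dist (sigma tau : S -> S -> R) s x :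
  `|sigma s x - tau s x| <= dF sigma tau.
Proof.
apply: le_trans (le_bigmax _ _ s).
exact: (le_bigmax _ (fun x => `|sigma s x - tau s x|) x).
Qed.

Lemma l1_dist_le_dF (sigma tau : S -> S -> R) s :
  l1_dist (sigma s) (tau s) <= #|S|%:R * dF sigma tau.
Proof.
apply: le_trans (ler_sum _ (fun x _ => dF_ge_dist sigma tau s x)) _.
by rewrite sumr_const mulr_natl.
Qed.

End Couplings.

Section BisimilarityDistance.
Variables (R : realType) (S L : finType) (ell : S -> L).
Implicit Types (sigma tau d : S -> S -> R).

Definition coupling_costs sigma d s t :=
  [set r : R | exists om,
    is_coupling (sigma s) (sigma t) om /\ r = transport_cost om d].

Lemma DeltaE sigma d s t :
  ell s = ell t -> Delta ell sigma d s t = inf (coupling_costs sigma d s t).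
Proof. by move=> e_st; rewrite /Delta e_st eqxx. Qed.

Lemma coupling_costs_neq0 sigma d s t :
  is_trans sigma -> coupling_costs sigma d s t !=set0.
Proof.
move=> hs; eexists; exists (fun u v => sigma s u * sigma t v).
by split; first exact: prod_coupling.
Qed.

Lemma coupling_costs_lbound sigma d s t :
  (forall u v, 0 <= d u v) -> lbound (coupling_costs sigma d s t) 0.
Proof. by move=> d0 r [om [[om0 _ _] ->]]; apply: transport_cost_ge0. Qed.

Lemma Delta_ge0 sigma d s t :
  is_trans sigma -> (forall u v, 0 <= d u v) -> 0 <= Delta ell sigma d s t.
Proof.
move=> hs d0; rewrite /Delta; case: ifP => // _.
by apply: lb_le_inf; [exact: coupling_costs_neq0 | exact: coupling_costs_lbound].
Qed.

Lemma Delta_le_transport_cost sigma d s t om :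
  (forall u v, 0 <= d u v) -> ell s = ell t -> is_coupling (sigma s) (sigma t) om ->
  Delta ell sigma d s t <= transport_cost om d.
Proof.
move=> d0 e_st hom; rewrite DeltaE //.
by apply: ge_inf; [exists 0; exact: coupling_costs_lbound | exists om].
Qed.

Lemma Delta_le1 sigma d s t :
  is_trans sigma -> unit_valued d -> Delta ell sigma d s t <= 1.
Proof.
move=> hs hd; have d0 u v : 0 <= d u v by case/andP: (hd u v).
case: (eqVneq (ell s) (ell t)) => [e_st|ne]; last by rewrite /Delta ne.
have hom := prod_coupling (hs s) (hs t); have [om0 _ _] := hom.
apply: le_trans (Delta_le_transport_cost d0 e_st hom) _.
apply: le_trans (transport_cost_le_shift (d' := fun _ _ => 0) (e := 1) om0 _) _.
  by move=> u v; rewrite add0r; case/andP: (hd u v).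
rewrite mul1r (total_mass_coupling (hs s) hom) /transport_cost big1 ?add0r // => u _.
by rewrite big1 // => v _; rewrite mulr0.
Qed.

Lemma le_Delta sigma d d' s t :
  is_trans sigma -> (forall u v, 0 <= d u v) -> (forall u v, d u v <= d' u v) ->
  Delta ell sigma d s t <= Delta ell sigma d' s t.
Proof.
move=> hs d0 dd'; case: (eqVneq (ell s) (ell t)) => [e_st|ne]; last by rewrite /Delta ne.
rewrite [leRHS]DeltaE //; apply: lb_le_inf; first exact: coupling_costs_neq0.
move=> _ [om [hom ->]]; apply: le_trans (Delta_le_transport_cost d0 e_st hom) _.
have [om0 _ _] := hom.
by apply: ler_sum => u _; apply: ler_sum => v _; rewrite ler_wpM2l.
Qed.

(* Knaster-Tarski: the pointwise infimum of all prefixed points is itself a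
   fixed point, hence lies above the least fixed point. *)
Lemma bisim_dist_le_prefixed sigma delta d :
  is_trans sigma -> is_bisim_dist ell sigma delta -> unit_valued d ->
  (forall s t, Delta ell sigma d s t <= d s t) -> forall s t, delta s t <= d s t.
Proof.
move=> hs [_ _ hleast] hd hpre.
pose prefixed g := unit_valued g /\ forall s t, Delta ell sigma g s t <= g s t.
pose E s t := [set g s t | g in prefixed].
pose d0 s t := inf (E s t).
have pre1 : prefixed (fun _ _ => 1).
  have h1 : unit_valued (fun _ _ : S => 1 : R) by move=> ? ?; rewrite ler01 lexx.
  by split=> // s t; exact: Delta_le1.
have E_lb s t : lbound (E s t) 0 by move=> _ [g [hg _] <-]; case/andP: (hg s t).
have d0_le g : prefixed g -> forall s t, d0 s t <= g s t.
  by move=> Pg s t; apply: ge_inf; [exists 0 | exists g].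
have d0_ge0 s t : 0 <= d0 s t by apply: lb_le_inf; [exists 1, (fun _ _ => 1) |].
have pre_d0 : prefixed d0.
  split=> [s t|s t]; first by rewrite d0_ge0 (d0_le _ pre1).
  apply: lb_le_inf => [|_ [g Pg <-]]; first by exists 1, (fun _ _ => 1).
  exact: le_trans (le_Delta s t hs d0_ge0 (d0_le g Pg)) (Pg.2 s t).
have pre_Delta_d0 : prefixed (Delta ell sigma d0).
  split=> [s t|s t]; first by rewrite Delta_ge0 //= Delta_le1 //; exact: pre_d0.1.
  by apply: le_Delta => // [u v|u v]; [exact: Delta_ge0 | exact: pre_d0.2].
have fix_d0 s t : Delta ell sigma d0 s t = d0 s t.
  by apply/le_anti; rewrite pre_d0.2 (d0_le _ pre_Delta_d0).
move=> s t; apply: le_trans (hleast d0 pre_d0.1 fix_d0 s t) _.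
exact: d0_le (conj hd hpre) s t.
Qed.

Lemma Delta_le_perturb sigma tau d d' e s t :
  is_trans sigma -> is_trans tau -> unit_valued d -> (forall u v, 0 <= d' u v) ->
  0 <= e -> (forall u v, d u v <= d' u v + e) ->
  Delta ell tau d s t <= Delta ell sigma d' s t + e + 2 * #|S|%:R * dF sigma tau.
Proof.
move=> hsigma htau hd d'0 e0 dd'.
have dF0 : 0 <= dF sigma tau by apply: le_trans (dF_ge_dist sigma tau s s).
case: (eqVneq (ell s) (ell t)) => [e_st|ne]; last first.
  by rewrite /Delta ne -addrA lerDl addr_ge0 // !mulr_ge0.
apply/ler_addgt0Pr => eps eps0.
have : Delta ell sigma d' s t < Delta ell sigma d' s t + eps by rewrite ltrDl.
rewrite {1}DeltaE // => /inf_lt[]; first exact: coupling_costs_neq0.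
move=> _ [om [hom ->]] om_lt; have [om0 _ _] := hom.
have [om' hom' cost_om'] := coupling_perturb (htau s) (htau t) (hsigma s) hom hd.
have d0 u v : 0 <= d u v by case/andP: (hd u v).
apply: le_trans (Delta_le_transport_cost d0 e_st hom') _.
have := transport_cost_le_shift om0 dd'; rewrite (total_mass_coupling (hsigma s) hom).
have := l1_dist_le_dF sigma tau s; have := l1_dist_le_dF sigma tau t.
lra.
Qed.

End BisimilarityDistance.

Section LiminfEFin.
Variable R : realType.
Local Open Scope ereal_scope.

Lemma limn_einfE (u : (\bar R)^nat) : limn_einf u = ereal_sup (range (einfs u)).
Proof. by rewrite limn_einf_lim; apply/cvg_lim => //; exact: cvg_einfs_sup. Qed.

Variable x : nat -> R.

Lemma limn_einf_EFin_in01 : (forall n, 0 <= x n <= 1)%R ->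
  0 <= limn_einf (fun n => (x n)%:E) <= 1.
Proof.
move=> x01; rewrite limn_einfE; apply/andP; split.
  apply: le_ereal_sup_tmp; exists (einfs (fun n => (x n)%:E) 0%N); first by exists 0%N.
  by apply/ereal_infP => _ [k _ <-]; rewrite lee_fin; case/andP: (x01 k).
apply/ereal_supP => _ [N _ <-].
apply: ge_ereal_inf; exists (x N)%:E; first by exists N => /=.
by rewrite lee_fin; case/andP: (x01 N).
Qed.

Lemma limn_einf_EFin_near_ge (l e : R) : limn_einf (fun n => (x n)%:E) = l%:E ->
  (0 < e)%R -> \forall n \near \oo, (l - e <= x n)%R.
Proof.
move=> xl e0; have : (l - e)%:E < limn_einf (fun n => (x n)%:E).
  by rewrite xl lte_fin ltrBlDr ltrDl.
rewrite limn_einfE => /ereal_sup_gt [_ [N _ <-] ltN]; exists N => // n /= Nn.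
by rewrite -lee_fin; apply: le_trans (ltW ltN) _; apply: ereal_inf_lbound; exists n.
Qed.

Lemma limn_einf_EFin_lt_infinitely (l e : R) N : limn_einf (fun n => (x n)%:E) = l%:E ->
  (0 < e)%R -> exists2 n, (N <= n)%N & (x n < l + e)%R.
Proof.
move=> xl e0; have : einfs (fun n => (x n)%:E) N < (l + e)%:E.
  apply: (@le_lt_trans _ _ l%:E); last by rewrite lte_fin ltrDl.
  by rewrite -xl limn_einfE; apply: ereal_sup_ubound; exists N.
by move=> /ereal_inf_lt [_ [k Nk <-] ltk]; exists k; rewrite // -lte_fin.
Qed.

End LiminfEFin.

Theorem proposition1 (R : realType) (S L : finType) (ell : S -> L)
    (tau : S -> S -> R) (delta : S -> S -> R)
    (taun : nat -> S -> S -> R) (deltan : nat -> S -> S -> R) :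
  is_trans tau ->
  is_bisim_dist ell tau delta ->
  (forall n, is_trans (taun n)) ->
  (forall n, is_bisim_dist ell (taun n) (deltan n)) ->
  (fun n => dF (taun n) tau) @ \oo --> (0 : R) ->
  forall s t : S,
    ((delta s t)%:E <= limn_einf (fun n => (deltan n s t)%:E))%E.
Proof.
move=> htau hdelta htaun hdeltan hcvg.
have deltan01 u v n : 0 <= deltan n u v <= 1 by have [h _ _] := hdeltan n; exact: h.
pose dinf u v := fine (limn_einf (fun n => (deltan n u v)%:E)).
have dinfE u v : limn_einf (fun n => (deltan n u v)%:E) = (dinf u v)%:E.
  have /andP[l0 l1] := limn_einf_EFin_in01 (deltan01 u v).
  by rewrite fineK // ge0_fin_numE // (le_lt_trans l1) ?ltry.
have dinf01 : unit_valued dinf.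
  by move=> u v; have := limn_einf_EFin_in01 (deltan01 u v); rewrite dinfE !lee_fin.
move=> s t; rewrite dinfE lee_fin.
apply: (bisim_dist_le_prefixed htau hdelta dinf01) => {}s {}t.
apply/ler_addgt0Pr => eps eps0.
pose K : R := 2 + 2 * #|S|%:R; pose e := eps / K.
have e0 : 0 < e by rewrite divr_gt0 // ltr_pwDl // mulr_ge0.
have dinf_le_deltan : \forall n \near \oo, forall u v, dinf u v <= deltan n u v + e.
  apply: filter_forall => u; apply: filter_forall => v.
  by near=> n; rewrite -lerBlDr; near: n; exact: limn_einf_EFin_near_ge (dinfE u v) e0.
have dF_small : \forall n \near \oo, dF (taun n) tau <= e.
  by near=> n; apply: le_trans (ler_norm _) _; near: n; exact: cvgr0_norm_le.
have [N _ hN] := filterI dinf_le_deltan dF_small.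
have [n Nn lt_n] := limn_einf_EFin_lt_infinitely N (dinfE s t) e0.
have [dinf_le dF_le] := hN n Nn.
have [_ fix_n _] := hdeltan n.
have d'0 u v : 0 <= deltan n u v by case/andP: (deltan01 u v n).
apply: le_trans (Delta_le_perturb ell s t (htaun n) htau dinf01 d'0 (ltW e0) dinf_le) _.
have : 2 * #|S|%:R * dF (taun n) tau <= 2 * #|S|%:R * e by rewrite ler_wpM2l // mulr_ge0.
have : eps = K * e by rewrite /e mulrC divfK // gt_eqF // ltr_pwDl // mulr_ge0.
rewrite fix_n /K; lra.
Unshelve. all: by end_near.
Qed.
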